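(* Let $m\ge 1$ and let $P_m(z)=\sum_{j=0}^m p_jz^j$ with $p_j=\frac{(2m-j)!}{j!(m-j)!}$. For every $\theta\in[-\pi,\pi]$, all zeros (in $z$) of the polynomial $M_m(\theta,z)=P_m(z)-e^{\mathrm{i}\theta}P_m(-z)$ are purely imaginary, i.e. lie on the imaginary axis $\{\operatorname{Re}z=0\}$.
   Context: $P_m(z)/P_m(-z)$ is the $(m,m)$-Padé approximant of $e^z$ (the stability function of the $m$-stage Gauss Runge–Kutta method). *)

From HB Require Import structures.
From mathcomp Require Import all_boot all_order all_algebra.
From mathcomp Require Import all_classical all_reals.
From mathcomp Require Import trigo.
From mathcomp Require Import complex.
Set Implicit Arguments. Unset Strict Implicit. Unset Printing Implicit Defensive.
Import Order.TTheory GRing.Theory Num.Theory.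
Local Open Scope ring_scope.
Local Open Scope complex_scope.

Definition pade_coef (R : realType) (m j : nat) : R[i] :=
  ((2 * m - j)`!)%:R / ((j`!)%:R * ((m - j)`!)%:R).

Definition Pm (R : realType) (m : nat) : {poly R[i]} :=
  \poly_(j < m.+1) pade_coef R m j.

Definition expi (R : realType) (t : R) : R[i] := (cos t)%:C + 'i * (sin t)%:C.

Definition Mm (R : realType) (m : nat) (t : R) (z : R[i]) : R[i] :=
  (Pm R m).[z] - expi t * (Pm R m).[- z].

From mathcomp Require Import all_boot all_order all_algebra.
From mathcomp Require Import all_classical all_reals.
From mathcomp Require Import trigo.
From mathcomp Require Import complex.
From mathcomp Require Import ring lra zify.
Import Order.TTheory GRing.Theory Num.Theory.
Local Open Scope ring_scope.
Local Open Scope complex_scope.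

(* The P_m satisfy P_(n+2) = 2(2n+3) P_(n+1) + z^2 P_n, so for Re w >= 0,
   w <> 0, the ratio f_n = P_(n+1)(w) / (w P_n(w)) obeys
   f_(n+1) = 2(2n+3)/w + 1/f_n: it is a continued fraction all of whose terms
   have positive real part; hence P_m has no zero with Re w >= 0.  As P_m
   also has real coefficients, for Re w > 0 every root r satisfies
   |-conj w - r| < |w - r|, which gives |P_m(-w)| < |P_m(w)|.  A zero of M_m
   forces |P_m(z)| = |P_m(-z)|, so it lies neither to the right nor to the
   left of the imaginary axis. *)

(* The [Re] of the statement is the generic real part of a
   numClosedFieldType; the proof works with the first coordinate. *)
Local Notation cRe := complex.Re.
Local Notation cIm := complex.Im.

Section ComplexRe.
Context {R : rcfType}.
Implicit Types x y w r : R[i].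

Lemma Re_invc x : cRe x^-1 = cRe x / (cRe x ^+ 2 + cIm x ^+ 2).
Proof. by case: x. Qed.

Lemma Re_invc_ge0 x : 0 <= cRe x -> 0 <= cRe x^-1.
Proof. by move=> x_ge0; rewrite Re_invc divr_ge0 ?addr_ge0 ?sqr_ge0. Qed.

Lemma Re_invc_gt0 x : 0 < cRe x -> 0 < cRe x^-1.
Proof.
by move=> x_gt0; rewrite Re_invc divr_gt0 ?ltr_wpDr ?sqr_ge0 ?exprn_gt0.
Qed.

Lemma Re_natrM n x : cRe (n%:R * x) = n%:R * cRe x.
Proof. by rewrite mulr_natl raddfMn /= mulr_natl. Qed.

Lemma normr_lt_Re_Im x y :
  cRe x ^+ 2 + cIm x ^+ 2 < cRe y ^+ 2 + cIm y ^+ 2 -> `|x| < `|y|.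
Proof. by rewrite -ltcR !add_Re2_Im2 ltr_pXn2r // qualifE /= normr_ge0. Qed.

Lemma normr_reflect_lt w r : 0 < cRe w -> cRe r < 0 -> `|- w^* - r| < `|w - r|.
Proof.
by case: w r => [a b] [c d] /= a_gt0 c_lt0; apply: normr_lt_Re_Im => /=; nra.
Qed.

Lemma normr_horner_lt (p : {poly R[i]}) w :
  map_poly conjc p = p -> (1 < size p)%N -> (forall r, root p r -> cRe r < 0) ->
  0 < cRe w -> `|p.[- w]| < `|p.[w]|.
Proof.
move=> p_real p_nonconst p_Hurwitz w_gt0.
have [rs def_p] := closed_field_poly_normal p; set c := lead_coef p in def_p.
have c_neq0 : c != 0 by rewrite lead_coef_eq0 -size_poly_gt0; lia.
have p_eval x : p.[x] = c * \prod_(r <- rs) (x - r).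
  by rewrite def_p hornerZ horner_prod; under eq_bigr do rewrite hornerXsubC.
have rs_neq0 : rs != [::].
  apply: contra_ltnN p_nonconst => /eqP rs_nil.
  by rewrite def_p size_scale // rs_nil big_nil size_poly1.
have -> : `|p.[- w]| = `|p.[- w^*]|.
  by rewrite -normcJ -horner_map p_real rmorphN.
rewrite !p_eval !normrM !normr_prod ltr_pM2l ?normr_gt0 //.
rewrite big_seq [ltRHS]big_seq; apply: ltr_prod => [|r r_in].
  by case: rs {def_p p_eval} rs_neq0 => // r s _; rewrite /= mem_head.
by rewrite normr_ge0 normr_reflect_lt // p_Hurwitz // def_p rootZ // root_prod_XsubC.
Qed.
End ComplexRe.

Section Pade.
Context {R : realType}.
Local Notation C := R[i].
Local Notation fact_C k := ((k)`!%:R : C).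

Lemma fact_C_neq0 k : fact_C k != 0.
Proof. by rewrite pnatr_eq0 -lt0n fact_gt0. Qed.

Lemma pade_coef_neq0 m j : pade_coef R m j != 0.
Proof. by rewrite mulf_neq0 ?invr_eq0 ?mulf_neq0 ?fact_C_neq0. Qed.

(* Writing m = j + k avoids the truncated subtractions of [pade_coef]. *)
Lemma pade_coefE m j k : m = (j + k)%N ->
  pade_coef R m j = fact_C (j + 2 * k) / (fact_C j * fact_C k).
Proof. by move->; rewrite /pade_coef; congr (_`!%:R / (_ * _`!%:R)); lia. Qed.

Lemma coef_Pm m j : (Pm R m)`_j = if (j <= m)%N then pade_coef R m j else 0.
Proof. by rewrite coef_poly ltnS. Qed.

Ltac pade_field :=
  rewrite ?(add0n, addn0, addSn, addnS, mulnS, muln0) !factS !natrM; field;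
  by rewrite ?fact_C_neq0 ?nat1r -?natrD ?pnatr_eq0.

Lemma Pm_rec n : Pm R n.+2 = (2 * (2 * n + 3))%:R *: Pm R n.+1 + 'X^2 * Pm R n.
Proof.
apply/polyP => j; rewrite coefD coefZ coefXnM !coef_Pm.
case: j => [|[|j]] /=; rewrite ?subSS ?subn0 ?add0r ?addr0.
- rewrite (@pade_coefE n.+2 0 n.+2) // (@pade_coefE n.+1 0 n.+1) //.
  pade_field.
- rewrite (@pade_coefE n.+2 1 n.+1) // (@pade_coefE n.+1 1 n) //.
  pade_field.
rewrite !ltnS; case: ltngtP => [lt_jn|lt_nj|->]; rewrite ?mulr0 ?addr0 ?add0r //.
- have [k def_n] : exists k, n = (j + k.+1)%N by exists (n - j.+1)%N; lia.
  rewrite (@pade_coefE n.+2 j.+2 k.+1) 1?(@pade_coefE n.+1 j.+2 k)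
    1?(@pade_coefE n j k.+1); try lia.
  by rewrite def_n; pade_field.
- rewrite (@pade_coefE n.+2 n.+2 0) 1?(@pade_coefE n n 0) ?addn0 //.
  pade_field.
Qed.

Lemma Pm0 : Pm R 0 = 1.
Proof.
apply/polyP => j; rewrite coef_Pm coef1; case: j => [|j] //=.
by rewrite /pade_coef /= mulr1 divr1.
Qed.

Lemma Pm1 : Pm R 1 = 2%:P + 'X.
Proof.
apply/polyP => j; rewrite coef_Pm coefD coefC coefX; case: j => [|[|j]] /=.
- by rewrite /pade_coef /= !mulr1 divr1 addr0.
- by rewrite /pade_coef /= !mulr1 divr1 add0r.
- by rewrite addr0.
Qed.

Lemma Pm_ratio_Re_gt0 n w : 0 <= cRe w -> w != 0 ->
  (Pm R n).[w] != 0 /\ 0 < cRe ((Pm R n.+1).[w] / (w * (Pm R n).[w])).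
Proof.
move=> w_ge0 w_neq0; have winv_ge0 : 0 <= cRe w^-1 by exact: Re_invc_ge0.
elim: n => [|n [Pn_neq0 IHn]].
  rewrite Pm0 Pm1 !hornerE oner_neq0; split => //.
  have -> : (2 + w) / w = 2%:R * w^-1 + 1 by field.
  by rewrite raddfD /= Re_natrM; lra.
set f := (Pm R n.+1).[w] / (w * (Pm R n).[w]) in IHn *.
have f_neq0 : f != 0 by apply: contraTneq IHn => ->; rewrite ltxx.
have Pn1_neq0 : (Pm R n.+1).[w] != 0.
  by apply: contraNneq f_neq0; rewrite /f => ->; rewrite mul0r.
have -> : (Pm R n.+2).[w] / (w * (Pm R n.+1).[w])
          = (2 * (2 * n + 3))%:R * w^-1 + f^-1.
  by rewrite /f Pm_rec !hornerE; field; rewrite w_neq0 Pn1_neq0 Pn_neq0.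
split=> //; rewrite raddfD /= Re_natrM ltr_wpDl ?Re_invc_gt0 // mulr_ge0 //.
Qed.

Lemma Pm_neq0 n w : 0 <= cRe w -> (Pm R n).[w] != 0.
Proof.
have [->|w_neq0 w_ge0] := eqVneq w 0.
  by rewrite horner_coef0 coef_Pm pade_coef_neq0.
by case: (Pm_ratio_Re_gt0 n _ w_ge0 w_neq0).
Qed.

Lemma size_Pm n : size (Pm R n) = n.+1.
Proof. exact/size_poly_eq/pade_coef_neq0. Qed.

Lemma map_Pm_conjc n : map_poly conjc (Pm R n) = Pm R n.
Proof.
apply/polyP => j; rewrite coef_map /= !coef_Pm.
case: ifP => _; last exact: conjc0.
by rewrite /pade_coef fmorph_div rmorphM /= !conjc_nat.
Qed.

Lemma Pm_norm_lt n w : (1 <= n)%N -> 0 < cRe w ->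
  `|(Pm R n).[- w]| < `|(Pm R n).[w]|.
Proof.
move=> n_gt0; apply: normr_horner_lt; rewrite ?map_Pm_conjc ?size_Pm //.
by move=> r; apply: contraTT; rewrite -leNgt; apply: Pm_neq0.
Qed.

Lemma normr_expi (t : R) : `|expi t| = 1.
Proof.
apply/eqP; rewrite -sqrp_eq1 ?normr_ge0 // -add_Re2_Im2 /=.
by rewrite ?(mul0r, mul1r, mulr0, subr0, add0r, addr0) cos2Dsin2.
Qed.
End Pade.

Theorem proposition2 (R : realType) (m : nat) (hm : (1 <= m)%N) (t : R)
  (ht : - pi <= t <= pi) (z : R[i]) :
  Mm m t z = 0 -> Re z = 0.
Proof.
move=> /eqP; rewrite subr_eq0 => /eqP Pz.
have norm_Pz : `|(Pm R m).[z]| = `|(Pm R m).[- z]|.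
  by rewrite Pz normrM normr_expi mul1r.
have Re_le0 w : `|(Pm R m).[w]| = `|(Pm R m).[- w]| -> cRe w <= 0.
  move=> norm_eq; rewrite leNgt; apply/negP => /(Pm_norm_lt _ _ hm).
  by rewrite norm_eq ltxx.
rewrite ReE -ReJ_add; suff -> : cRe z = 0 by [].
by apply/eqP; rewrite eq_le Re_le0 //= -oppr_le0 -raddfN Re_le0 // opprK norm_Pz.
Qed.
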